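(* For integers $n\ge1$, $k\ge0$, $\ell\ge0$, let \[E(n,k,\ell)=\sum_{\substack{i_0+i_1+\cdots+i_k=n\\ j_0+j_1+\cdots+j_k=\ell}}\prod_{t=0}^kN(i_t,j_t+1),\] where the sum ranges over all compositions $(i_0,\ldots,i_k)$ of $n$ into $k+1$ positive parts and all weak compositions $(j_0,\ldots,j_k)$ of $\ell$ into $k+1$ nonnegative parts. Then $E(n,k,\ell)=N_k(n,\ell+1)$.
   Context: $N(i,j)=\frac1i\binom ij\binom i{j-1}$ is a Narayana number, and the generalized Narayana numbers are $N_k(n,r)=\frac{k+1}{n}\binom{n}{r+k}\binom{n}{r-1}$ (so $N_0=N$). *)

From mathcomp Require Import all_boot all_order all_algebra.
Set Implicit Arguments. Unset Strict Implicit. Unset Printing Implicit Defensive.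
Import GRing.Theory Num.Theory.
Local Open Scope ring_scope.

(* 'C(n, j - 1) with the convention 'C(n, -1) = 0 *)
Definition binom_pred (n j : nat) : nat := if j is j'.+1 then 'C(n, j') else 0%N.

Definition narayana (i j : nat) : rat :=
  (i%:R)^-1 * ('C(i, j))%:R * (binom_pred i j)%:R.

Definition gen_narayana (k n r : nat) : rat :=
  (k.+1)%:R / n%:R * ('C(n, r + k))%:R * (binom_pred n r)%:R.

(* Parts are bounded by n (resp. l), so ranging over 'I_n.+1 (resp. 'I_l.+1)
   captures all of them. *)
Definition E (n k l : nat) : rat :=
  \sum_(i : {ffun 'I_k.+1 -> 'I_n.+1} |
          ((\sum_(t < k.+1) (i t : nat))%N == n) && [forall t, (0 < i t)%N])
   \sum_(j : {ffun 'I_k.+1 -> 'I_l.+1} | (\sum_(t < k.+1) (j t : nat))%N == l)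
     \prod_(t < k.+1) narayana (i t) (j t).+1.

From mathcomp Require Import all_boot all_order all_algebra.
From mathcomp Require Import ring.

Set Implicit Arguments. Unset Strict Implicit. Unset Printing Implicit Defensive.
Import GRing.Theory Num.Theory.
Local Open Scope ring_scope.

(* Let H(x, y) = sum_(a, c) N(a, c + 1) x^a y^c.  Expanding the power H^(k+1)
   shows that E(n, k, l) is its coefficient of x^n y^l, so it suffices to show that
   the coefficient of x^a y^c in H^m is N_(m-1)(a, c + 1) = (m / a) C(a, c) C(a, c + m).
   The Narayana numbers satisfy H = x (1 + H) (1 + y H), hence
   H^m = x H^(m-1) (1 + H) (1 + y H), which determines the coefficients of H^m by
   induction on the x-degree; the closed form satisfies the same recurrence by
   Pascal's rule and the absorption identity.  H is truncated to a polynomial, so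
   the functional equation only holds in the degrees below the truncation, which
   is all the induction uses. *)

Lemma coef_prod_sum_scaleXn (R : comNzRingType) (k N : nat) (g : 'I_k -> 'I_N -> R) n :
  (\prod_(t < k) \sum_(a < N) g t a *: 'X^a)`_n =
  \sum_(i : {ffun 'I_k -> 'I_N} | (\sum_(t < k) i t)%N == n) \prod_(t < k) g t (i t).
Proof.
rewrite bigA_distr_bigA coef_sum [RHS]big_mkcond; apply: eq_bigr => i _ /=.
under eq_bigr do rewrite -mul_polyC.
rewrite big_split /= -rmorph_prod prodrXr mul_polyC coefZ coefXn eq_sym.
by case: eqP; rewrite ?mulr1 ?mulr0.
Qed.

Lemma coef2M_eq (R : nzRingType) (r p q : {poly {poly R}}) a c :
  (forall b e, (b <= a)%N -> (e <= c)%N -> p`_b`_e = q`_b`_e) ->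
  (r * p)`_a`_c = (r * q)`_a`_c.
Proof.
move=> pq; rewrite !coefM !coef_sum; apply: eq_bigr => i _.
rewrite !coefM; apply: eq_bigr => j _.
by rewrite pq // leq_subr.
Qed.

Lemma binS_absorb (R : pzRingType) (b j : nat) :
  j.+1%:R * 'C(b, j.+1)%:R = (b%:R - j%:R) * 'C(b, j)%:R :> R.
Proof.
rewrite -natrM mul_bin_left natrM.
have [hjb | hbj] := leqP j b; first by rewrite natrB.
by rewrite bin_small // !mulr0.
Qed.

Lemma binS_pred (b c : nat) : 'C(b.+1, c) = ('C(b, c) + binom_pred b c)%N.
Proof. by case: c => [|c] /=; rewrite ?bin0 ?addn0 ?binS. Qed.

Lemma binom_pred_absorb (R : pzRingType) (b c : nat) :
  c%:R * 'C(b, c)%:R = (b%:R + 1 - c%:R) * (binom_pred b c)%:R :> R.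
Proof.
case: c => [|c] /=; first by rewrite !mul0r mulr0.
by rewrite binS_absorb -natr1 opprD addrACA subrr addr0.
Qed.

Lemma narayana_rec_identity (F : fieldType) (b c m U V W Z : F) :
  b != 0 -> b + 1 != 0 ->
  c * V = (b + 1 - c) * U -> (c + m + 1) * Z = (b - (c + m)) * W ->
  (m + 1) / (b + 1) * (Z + W) * (V + U) =
  m / b * W * V + (m + 1) / b * Z * V + ((m + 1) / b * W * U + (m + 2) / b * Z * U).
Proof.
move=> b0 b1 eV eZ; apply/eqP; rewrite -subr_eq0; apply/eqP.
have -> : (m + 1) / (b + 1) * (Z + W) * (V + U) -
  (m / b * W * V + (m + 1) / b * Z * V + ((m + 1) / b * W * U + (m + 2) / b * Z * U)) =
  ((W + Z) * (c * V - (b + 1 - c) * U) - (V + U) * ((c + m + 1) * Z - (b - (c + m)) * W))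
    / (b * (b + 1)) by field; rewrite b0 b1.
by rewrite eV eZ !subrr !mulr0 subrr mul0r.
Qed.

(* The claimed coefficient of x^a y^c in H^m. *)
Definition narayana_pow (m a c : nat) : rat :=
  if m is m'.+1 then gen_narayana m' a c.+1 else ((a == 0) && (c == 0))%:R.

Lemma narayana_powS0 m c : narayana_pow m.+1 0 c = 0.
Proof. by rewrite /= /gen_narayana invr0 mulr0 !mul0r. Qed.

Lemma narayana_pow_gt0 m a c : (0 < a)%N ->
  narayana_pow m a c = m%:R / a%:R * 'C(a, c + m)%:R * 'C(a, c)%:R.
Proof.
case: a => // a _; case: m => [|m] /=; first by rewrite !mul0r.
by rewrite /gen_narayana addSnnS.
Qed.

Lemma narayana_pow_rec m a c :
  narayana_pow m.+1 a.+1 c = narayana_pow m a c + narayana_pow m.+1 a c +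
    (if c is c'.+1 then narayana_pow m.+1 a c' + narayana_pow m.+2 a c' else 0).
Proof.
have [-> | a_gt0] := posnP a.
  case: c => [|c]; rewrite !narayana_powS0 ?addr0 /= /gen_narayana divr1 ?bin0 ?mulr1.
    by case: m => [|m]; rewrite ?mul1r // narayana_powS0 bin_small ?mulr0.
  by rewrite bin_small // !mulr0 mul0r; case: m => [|m]; rewrite ?narayana_powS0.
have -> : (if c is c'.+1 then narayana_pow m.+1 a c' + narayana_pow m.+2 a c' else 0) =
    m.+1%:R / a%:R * 'C(a, c + m)%:R * (binom_pred a c)%:R +
    m.+2%:R / a%:R * 'C(a, (c + m).+1)%:R * (binom_pred a c)%:R.
  case: c => [|c]; first by rewrite !mulr0 addr0.
  by rewrite !(narayana_pow_gt0 _ _ a_gt0) !addSn !addnS.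
set U := binom_pred a c; set V := 'C(a, c); set W := 'C(a, c + m).
set Z := 'C(a, (c + m).+1).
rewrite !narayana_pow_gt0 // addnS (binS a) (binS_pred a c) !natrD -/U -/V -/W -/Z.
rewrite -!natr1 -[m%:R + 1 + 1]addrA.
apply: (narayana_rec_identity (c := c%:R)).
- by rewrite pnatr_eq0 -lt0n.
- by rewrite natr1 pnatr_eq0.
- exact: binom_pred_absorb.
- by rewrite -natrD natr1 binS_absorb natrD.
Qed.

Notation bipoly := {poly {poly rat}}.

Lemma coefYM (p : bipoly) a c : ('Y * p)`_a`_c = if c is c'.+1 then p`_a`_c' else 0.
Proof. by rewrite coefCM coefXM; case: c. Qed.

Lemma coef_X_narayana_rec (f : nat -> bipoly) m a c :
  (forall j e, (e <= c)%N -> (f j)`_a`_e = narayana_pow j a e) ->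
  ('X * (f m + f m.+1 + 'Y * f m.+1 + 'Y * f m.+2))`_a.+1`_c = narayana_pow m.+1 a.+1 c.
Proof.
move=> fE; rewrite narayana_pow_rec coefXM /= !coefD !coefYM.
by case: c fE => [|c] fE; rewrite !fE // ?addr0 ?addrA.
Qed.

Definition narayana_gf (n l : nat) : bipoly :=
  \poly_(a < n.+1) \poly_(c < l.+1) narayana a c.+1.

Lemma narayana0 c : narayana 0 c = 0.
Proof. by rewrite /narayana invr0 !mul0r. Qed.

Lemma coef_narayana_gf n l a c : (a <= n)%N -> (c <= l)%N ->
  (narayana_gf n l)`_a`_c = narayana_pow 1 a c.
Proof.
move=> an cl; rewrite coef_poly ltnS an coef_poly ltnS cl.
by rewrite /narayana /= /gen_narayana addn0 div1r.
Qed.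

Lemma narayana_gf_coef0 n l : (narayana_gf n l)`_0 = 0.
Proof.
apply/polyP => c; rewrite coef_poly coef0 /= coef_poly.
by case: ifP => // _; rewrite narayana0.
Qed.

Lemma coef_narayana_gf_exp n l m a c : (a <= n)%N -> (c <= l)%N ->
  (narayana_gf n l ^+ m)`_a`_c = narayana_pow m a c.
Proof.
set H := narayana_gf n l.
elim/ltn_ind: a m c => a IH m c an cl.
case: a an IH => [|a] an IH.
  rewrite -horner_coef0 horner_exp horner_coef0 narayana_gf_coef0 expr0n.
  by case: m => [|m]; rewrite ?coef1 ?coef0 ?narayana_powS0.
have step j b e : (b <= a)%N -> (e <= c)%N ->
    (H ^+ j * ('X * ((1 + H) * (1 + 'Y * H))))`_b.+1`_e = narayana_pow j.+1 b.+1 e.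
  move=> ba ec.
  have -> : H ^+ j * ('X * ((1 + H) * (1 + 'Y * H))) =
      'X * (H ^+ j + H ^+ j.+1 + 'Y * H ^+ j.+1 + 'Y * H ^+ j.+2) by rewrite !exprS; ring.
  apply: (coef_X_narayana_rec (f := fun i => H ^+ i)) => i g ge.
  apply: IH; [exact: ba | exact: leq_trans ba (ltnW an) | exact: leq_trans ge (leq_trans ec cl)].
have H_funeq b e : (b <= a.+1)%N -> (e <= c)%N ->
    H`_b`_e = ('X * ((1 + H) * (1 + 'Y * H)))`_b`_e.
  case: b => [|b] ba ec; first by rewrite narayana_gf_coef0 coefXM.
  rewrite coef_narayana_gf ?(leq_trans ba) ?(leq_trans ec) //.
  by rewrite -(step 0%N) // expr0 mul1r.
case: m => [|m]; first by rewrite expr0 coef1 coef0.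
by rewrite exprSr (coef2M_eq _ H_funeq) step.
Qed.

Lemma E_coef n k l : E n k l = (narayana_gf n l ^+ k.+1)`_n`_l.
Proof.
have H_sum : narayana_gf n l =
    \sum_(a < n.+1) (\sum_(c < l.+1) narayana a c.+1 *: 'X^c) *: 'X^a.
  by rewrite /narayana_gf poly_def; apply: eq_bigr => a _; rewrite poly_def.
rewrite H_sum -(card_ord k.+1) -prodr_const coef_prod_sum_scaleXn coef_sum /E big_mkcondr /=.
apply: eq_bigr => i _; rewrite coef_prod_sum_scaleXn.
case: ifP => // /forallPn [t]; rewrite -eqn0Ngt => /eqP it0.
by rewrite big1 // => j _; rewrite (bigD1 t) //= it0 narayana0 mul0r.
Qed.

Theorem lemma4p1 (n k l : nat) : (1 <= n)%N -> E n k l = gen_narayana k n l.+1.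
Proof.
by move=> _; rewrite E_coef coef_narayana_gf_exp.
Qed.
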